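(* Let $\psi=(x,y,z):\Sigma\to\mathbb{R}^3$ be a $[\varphi,\vec e_3]$-minimal immersion and $\xi=u+iv$ a conformal parameter of $\Sigma$. Then the system $$x^*_\xi=-ie^{\varphi(z)}y_\xi,\qquad y^*_\xi=ie^{\varphi(z)}x_\xi,\qquad z^*_\xi=e^{\varphi(z)}z_\xi$$ for real functions $x^*,y^*,z^*$ is integrable: for each right-hand side $F\in\{-ie^{\varphi(z)}y_\xi,\ ie^{\varphi(z)}x_\xi,\ e^{\varphi(z)}z_\xi\}$ one has $\partial_{\bar\xi}F=\partial_\xi\overline{F}$ (i.e. the would-be mixed derivatives $x^*_{\xi\bar\xi}=x^*_{\bar\xi\xi}$, etc., agree).
   Context: $\varphi$ is a smooth function on an open interval $I$, $\vec e_3=(0,0,1)$. An immersion $\psi=(x,y,z):\Sigma\to\mathbb{R}^3$ with $z(\Sigma)\subseteq I$ is $[\varphi,\vec e_3]$-minimal if, regarding $\Sigma$ as a Riemann surface with the conformal structure of its induced metric, for every conformal parameter $\xi$: $2x_{\xi\bar\xi}+\dot\varphi(z)(z_\xi x_{\bar\xi}+z_{\bar\xi}x_\xi)=0$, $2y_{\xi\bar\xi}+\dot\varphi(z)(z_\xi y_{\bar\xi}+z_{\bar\xi}y_\xi)=0$, $2z_{\xi\bar\xi}-\dot\varphi(z)(|x_\xi|^2+|y_\xi|^2-|z_\xi|^2)=0$ (equivalently, its mean curvature vector is $\dot\varphi(z)\vec e_3^\perp$). *)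

From Stdlib Require Import Reals List.
From Coquelicot Require Import Coquelicot.
Open Scope R_scope.

(** Real functions of the conformal parameter xi = u + i v, on a domain of R^2. *)
Definition Du (f : R -> R -> R) : R -> R -> R :=
  fun u v => Derive (fun t => f t v) u.
Definition Dv (f : R -> R -> R) : R -> R -> R :=
  fun u v => Derive (fun t => f u t) v.

Fixpoint iterD (l : list bool) (f : R -> R -> R) : R -> R -> R :=
  match l with
  | nil => f
  | b :: l' => (if b then Du else Dv) (iterD l' f)
  end.

Definition open2 (U : R -> R -> Prop) : Prop :=
  forall u v, U u v -> exists eps, 0 < eps /\
    forall u' v', Rabs (u' - u) < eps -> Rabs (v' - v) < eps -> U u' v'.

Definition smooth2 (U : R -> R -> Prop) (f : R -> R -> R) : Prop :=
  forall (l : list bool) u v, U u v ->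
    ex_derive (fun t => iterD l f t v) u /\
    ex_derive (fun t => iterD l f u t) v /\
    continuous (fun p : R * R => iterD l f (fst p) (snd p)) (u, v).

Definition in_interval (a b : Rbar) (t : R) : Prop :=
  Rbar_lt a t /\ Rbar_lt t b.
Definition smooth_on_interval (a b : Rbar) (phi : R -> R) : Prop :=
  forall (n : nat) t, in_interval a b t -> ex_derive (Derive_n phi n) t.

(** complex-valued functions on the domain, and the Wirtinger operators
    F_xi = (F_u - i F_v)/2, F_xibar = (F_u + i F_v)/2 *)
Definition CDu (F : R -> R -> C) : R -> R -> C :=
  fun u v => (Derive (fun t => fst (F t v)) u, Derive (fun t => snd (F t v)) u).
Definition CDv (F : R -> R -> C) : R -> R -> C :=
  fun u v => (Derive (fun t => fst (F u t)) v, Derive (fun t => snd (F u t)) v).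

Definition dxi (F : R -> R -> C) : R -> R -> C :=
  fun u v => Cmult (RtoC (/2)) (Cminus (CDu F u v) (Cmult Ci (CDv F u v))).
Definition dxibar (F : R -> R -> C) : R -> R -> C :=
  fun u v => Cmult (RtoC (/2)) (Cplus (CDu F u v) (Cmult Ci (CDv F u v))).

Definition cR (f : R -> R -> R) : R -> R -> C := fun u v => RtoC (f u v).

Definition dot3 (a b : R * R * R) : R :=
  let '(a1, a2, a3) := a in let '(b1, b2, b3) := b in a1 * b1 + a2 * b2 + a3 * b3.

Definition conformal_immersion (U : R -> R -> Prop) (x y z : R -> R -> R) : Prop :=
  forall u v, U u v ->
    let pu := (Du x u v, Du y u v, Du z u v) in
    let pv := (Dv x u v, Dv y u v, Dv z u v) in
    dot3 pu pu = dot3 pv pv /\ dot3 pu pv = 0 /\ 0 < dot3 pu pu.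

Definition phi_e3_minimal (U : R -> R -> Prop) (phi : R -> R) (x y z : R -> R -> R) : Prop :=
  forall u v, U u v ->
    let dphi := RtoC (Derive phi (z u v)) in
    Cplus (Cmult (RtoC 2) (dxi (dxibar (cR x)) u v))
      (Cmult dphi (Cplus (Cmult (dxi (cR z) u v) (dxibar (cR x) u v))
                         (Cmult (dxibar (cR z) u v) (dxi (cR x) u v)))) = RtoC 0 /\
    Cplus (Cmult (RtoC 2) (dxi (dxibar (cR y)) u v))
      (Cmult dphi (Cplus (Cmult (dxi (cR z) u v) (dxibar (cR y) u v))
                         (Cmult (dxibar (cR z) u v) (dxi (cR y) u v)))) = RtoC 0 /\
    Cminus (Cmult (RtoC 2) (dxi (dxibar (cR z)) u v))
      (Cmult dphi (RtoC (Cmod (dxi (cR x) u v) ^ 2 + Cmod (dxi (cR y) u v) ^ 2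
                         - Cmod (dxi (cR z) u v) ^ 2))) = RtoC 0.

Definition Fx (phi : R -> R) (y z : R -> R -> R) : R -> R -> C :=
  fun u v => Cmult (Copp Ci) (Cmult (RtoC (exp (phi (z u v)))) (dxi (cR y) u v)).
Definition Fy (phi : R -> R) (x z : R -> R -> R) : R -> R -> C :=
  fun u v => Cmult Ci (Cmult (RtoC (exp (phi (z u v)))) (dxi (cR x) u v)).
Definition Fz (phi : R -> R) (z : R -> R -> R) : R -> R -> C :=
  fun u v => Cmult (RtoC (exp (phi (z u v)))) (dxi (cR z) u v).

Definition integrable_rhs (U : R -> R -> Prop) (F : R -> R -> C) : Prop :=
  forall u v, U u v ->
    dxibar F u v = dxi (fun u' v' => Cconj (F u' v')) u v.

(** Writing a right-hand side as [F = P + i Q], the condition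
    [F_xibar = (conj F)_xi] reads [Q_u + P_v = 0].  For [F = e^phi(z) z_xi]
    it says that [e^phi(z) dz] is closed, which reduces to [z_uv = z_vu].
    For [F = -i e^phi(z) y_xi] it says [div (e^phi(z) grad y) = 0], i.e.
    [Delta y + phi'(z) <grad z, grad y> = 0], which is twice the real part
    of the [y]-equation of [[phi, e3]]-minimality; likewise for [x]. *)

From Stdlib Require Import Reals Lra FunctionalExtensionality.
From Coquelicot Require Import Coquelicot.
Open Scope R_scope.

Lemma dxi_cR f u v : dxi (cR f) u v = (/2 * Du f u v, - /2 * Dv f u v).
Proof.
  unfold dxi, CDu, CDv, cR, RtoC, Du, Dv; simpl; rewrite !Derive_const.
  apply injective_projections; simpl; ring.
Qed.

Lemma dxibar_cR f : dxibar (cR f) = fun u v => (/2 * Du f u v, /2 * Dv f u v).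
Proof.
  apply functional_extensionality; intro u; apply functional_extensionality; intro v.
  unfold dxibar, CDu, CDv, cR, RtoC, Du, Dv; simpl; rewrite !Derive_const.
  apply injective_projections; simpl; ring.
Qed.

Lemma integrable_rhs_pair U (P Q : R -> R -> R) :
  (forall u v, U u v -> Du Q u v + Dv P u v = 0) ->
  integrable_rhs U (fun u v => (P u v, Q u v)).
Proof.
  intros HPQ u v Hu; specialize (HPQ u v Hu).
  unfold dxi, dxibar, CDu, CDv, Cconj, Du, Dv in *; simpl.
  rewrite !Derive_opp; change (Derive (Q u) v) with (Derive (fun t => Q u t) v).
  apply injective_projections; simpl; lra.
Qed.

Lemma Fx_eq phi y z : Fx phi y z = fun u v =>
  (-/2 * (exp (phi (z u v)) * Dv y u v), -/2 * (exp (phi (z u v)) * Du y u v)).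
Proof.
  apply functional_extensionality; intro u; apply functional_extensionality; intro v.
  unfold Fx; rewrite dxi_cR; apply injective_projections; simpl; ring.
Qed.

Lemma Fy_eq phi x z : Fy phi x z = fun u v =>
  (/2 * (exp (phi (z u v)) * Dv x u v), /2 * (exp (phi (z u v)) * Du x u v)).
Proof.
  apply functional_extensionality; intro u; apply functional_extensionality; intro v.
  unfold Fy; rewrite dxi_cR; apply injective_projections; simpl; ring.
Qed.

Lemma Fz_eq phi z : Fz phi z = fun u v =>
  (/2 * (exp (phi (z u v)) * Du z u v), -/2 * (exp (phi (z u v)) * Dv z u v)).
Proof.
  apply functional_extensionality; intro u; apply functional_extensionality; intro v.
  unfold Fz; rewrite dxi_cR; apply injective_projections; simpl; ring.
Qed.

Lemma minimal_eq_re phi (x z : R -> R -> R) u v :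
  Cplus (Cmult (RtoC 2) (dxi (dxibar (cR x)) u v))
    (Cmult (RtoC (Derive phi (z u v)))
       (Cplus (Cmult (dxi (cR z) u v) (dxibar (cR x) u v))
              (Cmult (dxibar (cR z) u v) (dxi (cR x) u v)))) = RtoC 0 ->
  Du (Du x) u v + Dv (Dv x) u v
    + Derive phi (z u v) * (Du z u v * Du x u v + Dv z u v * Dv x u v) = 0.
Proof.
  intro Hmin; apply (f_equal fst) in Hmin.
  rewrite !dxibar_cR, !dxi_cR in Hmin; unfold dxi, CDu, CDv in Hmin; simpl in Hmin.
  rewrite !Derive_scal in Hmin; unfold Du, Dv in *.
  nra.
Qed.

Lemma Derive_scal_exp_comp_mult (phi f g : R -> R) c t :
  ex_derive phi (f t) -> ex_derive f t -> ex_derive g t ->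
  Derive (fun s => c * (exp (phi (f s)) * g s)) t =
  c * exp (phi (f t)) * (Derive phi (f t) * Derive f t * g t + Derive g t).
Proof.
  intros Hphi Hf Hg; apply is_derive_unique.
  auto_derive; [tauto |].
  change (fun s => f s) with f; change (fun s => g s) with g;
    change (fun s => phi s) with phi.
  ring.
Qed.

Lemma Du_scal_exp_comp_mult phi (z g : R -> R -> R) c u v :
  ex_derive phi (z u v) -> ex_derive (fun t => z t v) u ->
  ex_derive (fun t => g t v) u ->
  Du (fun s t => c * (exp (phi (z s t)) * g s t)) u v =
  c * exp (phi (z u v)) * (Derive phi (z u v) * Du z u v * g u v + Du g u v).
Proof. exact (Derive_scal_exp_comp_mult phi (fun t => z t v) (fun t => g t v) c u). Qed.

Lemma Dv_scal_exp_comp_mult phi (z g : R -> R -> R) c u v :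
  ex_derive phi (z u v) -> ex_derive (fun t => z u t) v ->
  ex_derive (fun t => g u t) v ->
  Dv (fun s t => c * (exp (phi (z s t)) * g s t)) u v =
  c * exp (phi (z u v)) * (Derive phi (z u v) * Dv z u v * g u v + Dv g u v).
Proof. exact (Derive_scal_exp_comp_mult phi (fun t => z u t) (fun t => g u t) c v). Qed.

Section Smooth2.
Variables (U : R -> R -> Prop) (f : R -> R -> R).
Hypothesis f_smooth : smooth2 U f.

Lemma smooth2_ex_Du l u v : U u v -> ex_derive (fun t => iterD l f t v) u.
Proof. intro Hu; exact (proj1 (f_smooth l u v Hu)). Qed.

Lemma smooth2_ex_Dv l u v : U u v -> ex_derive (fun t => iterD l f u t) v.
Proof. intro Hu; exact (proj1 (proj2 (f_smooth l u v Hu))). Qed.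

Lemma smooth2_continuity_2d l u v : U u v -> continuity_2d_pt (iterD l f) u v.
Proof. intro Hu; apply continuity_2d_pt_filterlim, (f_smooth l u v Hu). Qed.

Lemma smooth2_Du_Dv u v : open2 U -> U u v -> Du (Dv f) u v = Dv (Du f) u v.
Proof.
  intros U_open Hu; apply Schwarz.
  - destruct (U_open u v Hu) as [eps [eps_pos Hball]].
    exists (mkposreal eps eps_pos); intros u' v' Hu' Hv'.
    assert (Hu'v' : U u' v') by auto.
    repeat split;
      [ apply (smooth2_ex_Du nil) | apply (smooth2_ex_Dv nil)
      | apply (smooth2_ex_Du (false :: nil)) | apply (smooth2_ex_Dv (true :: nil)) ];
      exact Hu'v'.
  - exact (smooth2_continuity_2d (true :: false :: nil) u v Hu).
  - exact (smooth2_continuity_2d (false :: true :: nil) u v Hu).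
Qed.

End Smooth2.

Section Weighted_gradient.
Variables (U : R -> R -> Prop) (phi : R -> R) (z : R -> R -> R).
Hypothesis z_smooth : smooth2 U z.
Hypothesis phi_derivable : forall u v, U u v -> ex_derive phi (z u v).

Lemma div_exp_phi_grad g c u v : smooth2 U g -> U u v ->
  Du (fun s t => c * (exp (phi (z s t)) * Du g s t)) u v
    + Dv (fun s t => c * (exp (phi (z s t)) * Dv g s t)) u v =
  c * exp (phi (z u v)) * (Du (Du g) u v + Dv (Dv g) u v
    + Derive phi (z u v) * (Du z u v * Du g u v + Dv z u v * Dv g u v)).
Proof.
  intros g_smooth Hu.
  rewrite Du_scal_exp_comp_mult, Dv_scal_exp_comp_mult.
  - ring.
  - exact (phi_derivable u v Hu).
  - exact (smooth2_ex_Dv U z z_smooth nil u v Hu).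
  - exact (smooth2_ex_Dv U g g_smooth (false :: nil) u v Hu).
  - exact (phi_derivable u v Hu).
  - exact (smooth2_ex_Du U z z_smooth nil u v Hu).
  - exact (smooth2_ex_Du U g g_smooth (true :: nil) u v Hu).
Qed.

Lemma curl_exp_phi_grad c u v : open2 U -> U u v ->
  Du (fun s t => - c * (exp (phi (z s t)) * Dv z s t)) u v
    + Dv (fun s t => c * (exp (phi (z s t)) * Du z s t)) u v = 0.
Proof.
  intros U_open Hu.
  rewrite Du_scal_exp_comp_mult, Dv_scal_exp_comp_mult, (smooth2_Du_Dv U z z_smooth u v U_open Hu).
  - ring.
  - exact (phi_derivable u v Hu).
  - exact (smooth2_ex_Dv U z z_smooth nil u v Hu).
  - exact (smooth2_ex_Dv U z z_smooth (true :: nil) u v Hu).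
  - exact (phi_derivable u v Hu).
  - exact (smooth2_ex_Du U z z_smooth nil u v Hu).
  - exact (smooth2_ex_Du U z z_smooth (false :: nil) u v Hu).
Qed.

End Weighted_gradient.

Theorem proposition1 (a b : Rbar) (phi : R -> R) (U : R -> R -> Prop)
  (x y z : R -> R -> R) :
  Rbar_lt a b ->
  smooth_on_interval a b phi ->
  open2 U ->
  smooth2 U x -> smooth2 U y -> smooth2 U z ->
  (forall u v, U u v -> in_interval a b (z u v)) ->
  conformal_immersion U x y z ->
  phi_e3_minimal U phi x y z ->
  integrable_rhs U (Fx phi y z) /\
  integrable_rhs U (Fy phi x z) /\
  integrable_rhs U (Fz phi z).
Proof.
  intros _ phi_smooth U_open x_smooth y_smooth z_smooth z_in_I _ Hmin.
  assert (phi_derivable : forall u v, U u v -> ex_derive phi (z u v))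
    by (intros u v Hu; exact (phi_smooth 0%nat _ (z_in_I u v Hu))).
  split; [| split].
  - rewrite Fx_eq; apply integrable_rhs_pair; intros u v Hu.
    rewrite (div_exp_phi_grad U phi z z_smooth phi_derivable y) by assumption.
    destruct (Hmin u v Hu) as [_ [y_min _]].
    rewrite (minimal_eq_re _ _ _ _ _ y_min); ring.
  - rewrite Fy_eq; apply integrable_rhs_pair; intros u v Hu.
    rewrite (div_exp_phi_grad U phi z z_smooth phi_derivable x) by assumption.
    destruct (Hmin u v Hu) as [x_min _].
    rewrite (minimal_eq_re _ _ _ _ _ x_min); ring.
  - rewrite Fz_eq; apply integrable_rhs_pair; intros u v Hu.
    exact (curl_exp_phi_grad U phi z z_smooth phi_derivable (/2) u v U_open Hu).
Qed.
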